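(* Let $s,t,q,N$ be integers with $0\le s<q$, $1\le t<q$, $N\ge0$, $t\nmid q$ and $\gcd(t,q)=g>1$. Put $\tilde t=t/g$, $\tilde q=q/g$, and write $s=\overline sg+s_g$ ($0\le s_g<g$), $\overline s=\overline{\overline s}\tilde t+\hat{\hat s}$ ($0\le\hat{\hat s}<\tilde t$), $\tilde q=\overline{\overline q}\tilde t+\hat{\hat q}$ ($1\le\hat{\hat q}<\tilde t$). Let $S^-(s,t,q,N)=\sum_{k=0}^N\lfloor(s-kt)/q\rfloor$, $M=-\lfloor(s-Nt)/q\rfloor$, $x_M=(s+(M-1)q)/t$, $S=-\lfloor q/t\rfloor\frac{(M-1)M}2-M(N-\lfloor x_M\rfloor)$, $H=\{k\in\mathbb N:(\hat{\hat s}+k\hat{\hat q})\bmod\tilde t<\hat{\hat q}\}$, $J=H\cap\{0,\dots,\tilde t-1\}=\{j_0<\dots<j_{\hat{\hat q}-1}\}$, $S_K=\sum_{k\in K}k$. Then: (a) if $j_0\ge M$, $S^-(s,t,q,N)=S$; (b.1) if $j_0<M\le j_{\hat{\hat q}-1}$, $S^-(s,t,q,N)=S-S_K$ with $K=H\cap\{0,\dots,M-1\}$; (b.2) if $j_{\hat{\hat q}-1}<M$ and $j_0+\tilde t\ge M$, $S^-(s,t,q,N)=S-S_J$; (b.3) if $j_{\hat{\hat q}-1}<M$ and $j_0+\tilde t<M$, with $u=\lfloor(M-1)/\tilde t\rfloor$ and $K=H\cap\{u\tilde t,\dots,M-1\}$, $S^-(s,t,q,N)=S-uS_J-\hat{\hat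 q}\,\tilde t\frac{(u-1)u}2-S_K$.
   Context: Here $r\bmod\tilde t$ denotes the representative of $r$ in $\{0,\dots,\tilde t-1\}$. *)

From HB Require Import structures.
From mathcomp Require Import all_boot all_order all_algebra.
Set Implicit Arguments. Unset Strict Implicit. Unset Printing Implicit Defensive.
Import Order.TTheory GRing.Theory Num.Theory.

Local Open Scope ring_scope.

(* Floors of rationals a/b with b > 0 are rendered as Euclidean int division
   (a %/ b)%Z, which is floor division for positive divisors. *)

Definition Sminus (s t q N : nat) : int :=
  \sum_(0 <= k < N.+1) ((s%:Z - (k * t)%:Z) %/ q%:Z)%Z.

Definition gg (t q : nat) : nat := gcdn t q.
Definition tt (t q : nat) : nat := (t %/ gg t q)%N.
Definition qt (t q : nat) : nat := (q %/ gg t q)%N.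
Definition sbar (s t q : nat) : nat := (s %/ gg t q)%N.
Definition hhs (s t q : nat) : nat := (sbar s t q %% tt t q)%N.
Definition hhq (t q : nat) : nat := (qt t q %% tt t q)%N.

Definition Mv (s t q N : nat) : int := - ((s%:Z - (N * t)%:Z) %/ q%:Z)%Z.
Definition floor_xM (s t q N : nat) : int :=
  ((s%:Z + (Mv s t q N - 1) * q%:Z) %/ t%:Z)%Z.
(* S = - floor(q/t) (M-1)M/2 - M (N - floor x_M) ; (M-1)M is even *)
Definition Sv (s t q N : nat) : int :=
  let M := Mv s t q N in
  - ((q %/ t)%N)%:Z * (((M - 1) * M) %/ 2)%Z - M * (N%:Z - floor_xM s t q N).

Definition inH (s t q : nat) (k : nat) : bool :=
  ((hhs s t q + k * hhq t q) %% tt t q < hhq t q)%N.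
Definition Jseq (s t q : nat) : seq nat :=
  [seq j <- iota 0 (tt t q) | inH s t q j].
Definition j0 (s t q : nat) : nat := head 0%N (Jseq s t q).
Definition jlast (s t q : nat) : nat := last 0%N (Jseq s t q).
Definition SJ (s t q : nat) : nat := \sum_(j <- Jseq s t q) j.
Definition SH (s t q a b : nat) : nat := \sum_(a <= k < b | inH s t q k) k.

From HB Require Import structures.
From mathcomp Require Import all_boot all_order all_algebra.
From mathcomp Require Import zify ring.
Import Order.TTheory GRing.Theory Num.Theory.

(* Write x_j = floor((s + j q)/t).  Since s + j q < k t says both
   j < -floor((s - k t)/q) and x_j < k, counting these pairs (j, k) in two
   ways gives S^-(s,t,q,N) = x_0 + ... + x_(M-1) - M N.  Dividing t and q by g,
   x_j = floor((sbar + j qt)/tt), so x_(j+1) - x_j = floor(q/t) + [j+1 in H]: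
   the extra carry happens exactly when the residue of sbar + (j+1) qt modulo
   tt drops below hhq.  Summing yields S^- = S - S_(H cap [0, M)).  As
   gcd(hhq, tt) = 1, k |-> hhs + k hhq mod tt permutes the residues, so H is
   tt-periodic with hhq elements per period, with J as its first period; the
   four cases evaluate S_(H cap [0, M)) accordingly. *)

Lemma divn_pmul2r_addsmall x y g r :
  0 < g -> r < g -> (x * g + r) %/ (y * g) = x %/ y.
Proof.
move=> g_gt0 r_lt_g.
by rewrite [y * g]mulnC divnMA divnMDl // (divn_small r_lt_g) addn0.
Qed.

Lemma carry_mod a h n : a < n -> h < n -> (n <= a + h) = ((a + h) %% n < h).
Proof.
move=> a_lt_n h_lt_n; case: (leqP n (a + h)) => [le_n_ah | lt_ah_n].
  by rewrite -(subnK le_n_ah) modnDr modn_small; lia.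
by rewrite modn_small // ltnNge leq_addl.
Qed.

Lemma count_lt_iota h n : h <= n -> count (fun i => i < h) (iota 0 n) = h.
Proof. by move=> hn; rewrite -size_filter (filter_iota_ltn 0 hn) size_iota. Qed.

Lemma perm_iota_affine_mod c h n :
  coprime n h -> perm_eq [seq (c + k * h) %% n | k <- iota 0 n] (iota 0 n).
Proof.
move=> co_nh; have [-> // | n_gt0] := posnP n.
have sub : {subset [seq (c + k * h) %% n | k <- iota 0 n] <= iota 0 n}.
  by move=> _ /mapP[k _ ->]; rewrite mem_iota ltn_mod n_gt0.
have uniq_map : uniq [seq (c + k * h) %% n | k <- iota 0 n].
  rewrite map_inj_in_uniq ?iota_uniq // => a b; rewrite !mem_iota !add0n => a_lt b_lt.
  move/eqP; rewrite eqn_modDl.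
  wlog le_ab : a b a_lt b_lt / a <= b => [wlog_ab | ].
    by case: (leqP a b) => [|/ltnW] le; [apply: wlog_ab | rewrite eq_sym => /wlog_ab->].
  rewrite eq_sym eqn_mod_dvd ?leq_mul2r ?le_ab ?orbT // -mulnBl Gauss_dvdl //.
  by move/dvdn_leq; case: (posnP (b - a)) => ba; lia.
have [_ eq_mem] := uniq_min_size uniq_map sub (eq_leq (esym (size_map _ _))).
by apply: uniq_perm; rewrite ?iota_uniq.
Qed.

Lemma count_affine_mod_lt c h n : coprime n h -> h <= n ->
  count (fun k => (c + k * h) %% n < h) (iota 0 n) = h.
Proof.
move=> co_nh le_hn.
rewrite -(count_map (fun k => (c + k * h) %% n) (fun i => i < h)).
by rewrite (permP (perm_iota_affine_mod c _ _ co_nh)) count_lt_iota.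
Qed.

(* Count the pairs (j, k) with k <= N and f j < k, once by k and once by j. *)
Lemma sum_galois (f c : nat -> nat) N :
  (forall j k, (j < c k) = (f j < k)) ->
  \sum_(0 <= k < N.+1) c k + \sum_(0 <= j < c N) f j = c N * N.
Proof.
move=> fc; have c0 : c 0 = 0 by apply/eqP; rewrite -leqn0 leqNgt fc.
have c_mono k : c k <= c k.+1.
  rewrite leqNgt; apply/negP => lt.
  have : f (c k.+1) < k.+1 by rewrite ltnS ltnW // -fc.
  by rewrite -fc ltnn.
elim: N => [|N IH]; first by rewrite big_nat1 c0 big_geq.
have f_eqN j : c N <= j < c N.+1 -> f j = N.
  case/andP; rewrite leqNgt fc -leqNgt fc ltnS => N_le_fj fj_le_N.
  by apply/eqP; rewrite eqn_leq fj_le_N.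
rewrite big_nat_recr //= (big_cat_nat (leq0n _) (c_mono N)) /=.
rewrite (eq_big_nat _ _ f_eqN) sum_nat_const_nat.
have := leq_mul (c_mono N) (leqnn N).
by move: IH; rewrite mulnBl mulnS; lia.
Qed.

Section FloorSums.

Variables s t q : nat.
Hypothesis t_gt0 : 0 < t.

Let g_gt0 : 0 < gg t q. Proof. by rewrite gcdn_gt0 t_gt0. Qed.

Let t_eq : t = tt t q * gg t q. Proof. by rewrite divnK ?dvdn_gcdl. Qed.
Let q_eq : q = qt t q * gg t q. Proof. by rewrite divnK ?dvdn_gcdr. Qed.

Lemma tt_gt0 : 0 < tt t q.
Proof. by rewrite divn_gt0 // dvdn_leq // dvdn_gcdl. Qed.

Lemma coprime_tt_qt : coprime (tt t q) (qt t q).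
Proof.
rewrite /coprime -(eqn_pmul2r g_gt0) muln_gcdl !divnK ?dvdn_gcdl ?dvdn_gcdr //.
by rewrite mul1n.
Qed.

Lemma inH_periodic k i : inH s t q (k + i * tt t q) = inH s t q k.
Proof. by rewrite /inH mulnDl mulnAC addnA addnC modnMDl. Qed.

Lemma count_inH_period : count (inH s t q) (iota 0 (tt t q)) = hhq t q.
Proof.
rewrite count_affine_mod_lt ?coprime_modr ?coprime_tt_qt //.
by rewrite ltnW // ltn_mod tt_gt0.
Qed.

Lemma SJ_SH : SJ s t q = SH s t q 0 (tt t q).
Proof. by rewrite /SJ /SH /Jseq big_filter /index_iota subn0. Qed.

Lemma SH_cat a b c : a <= b -> b <= c -> SH s t q a c = SH s t q a b + SH s t q b c.
Proof. exact: big_cat_nat. Qed.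

Lemma SH_eq0 a b : (forall k, a <= k < b -> ~~ inH s t q k) -> SH s t q a b = 0.
Proof.
move=> notH; rewrite /SH big_nat_cond big1 // => k /andP[/notH/negP notHk /notHk []].
Qed.

Lemma SH_recr m : SH s t q 0 m.+1 = SH s t q 0 m + inH s t q m * m.
Proof.
by rewrite /SH big_mkcond big_nat_recr //= -big_mkcond; case: inH; rewrite ?mul1n ?addn0.
Qed.

Lemma SH_period i :
  SH s t q (i * tt t q) (i * tt t q + tt t q) = SJ s t q + i * tt t q * hhq t q.
Proof.
rewrite SJ_SH /SH -{1}[i * tt t q]add0n big_addn addKn.
rewrite (eq_bigl (inH s t q)) => [|k]; last by rewrite inH_periodic.
rewrite big_split /= [in X in _ + X]big_const_seq /index_iota subn0.
by rewrite count_inH_period iter_addn_0.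
Qed.

Lemma SH_periods u :
  SH s t q 0 (u * tt t q) = u * SJ s t q + hhq t q * tt t q * 'C(u, 2).
Proof.
elim: u => [|u IH]; first by rewrite mul0n /SH big_geq ?bin0n ?muln0.
rewrite mulSnr (SH_cat _ _ _ (leq0n _) (leq_addr _ _)) IH SH_period binS bin1.
ring.
Qed.

Lemma mem_Jseq j : (j \in Jseq s t q) = (j < tt t q) && inH s t q j.
Proof. by rewrite mem_filter mem_iota add0n andbC. Qed.

Lemma Jseq_bounds j : j \in Jseq s t q -> j0 s t q <= j <= jlast s t q.
Proof.
move=> jJ; have sortedJ : sorted leq (Jseq s t q).
  by apply: sorted_filter; [exact: leq_trans | exact: iota_sorted].
have j_idx : index j (Jseq s t q) < size (Jseq s t q) by rewrite index_mem.
have le_nth := sorted_leq_nth leq_trans leqnn 0 sortedJ.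
rewrite /j0 /jlast -nth0 -(nth_last 0) -[in X in _ <= X <= _](nth_index 0 jJ).
by apply/andP; split; apply: le_nth; rewrite ?inE //; lia.
Qed.

Lemma j0_le_inH k : inH s t q k -> j0 s t q <= k.
Proof.
move=> Hk; have kJ : k %% tt t q \in Jseq s t q.
  by rewrite mem_Jseq ltn_mod tt_gt0 -(inH_periodic _ (k %/ tt t q)) addnC -divn_eq.
by apply: leq_trans (leq_mod k (tt t q)); case/andP: (Jseq_bounds _ kJ).
Qed.

Lemma notin_H_gap k : jlast s t q < k < j0 s t q + tt t q -> ~~ inH s t q k.
Proof.
case/andP=> jlast_lt_k k_lt; apply/negP => Hk.
have [k_lt_tt | tt_le_k] := ltnP k (tt t q).
  have /(Jseq_bounds k) : k \in Jseq s t q by rewrite mem_Jseq k_lt_tt.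
  by rewrite [k <= _]leqNgt jlast_lt_k andbF.
have : inH s t q (k - tt t q) by rewrite -(inH_periodic _ 1) mul1n subnK.
by move/j0_le_inH; lia.
Qed.

Lemma jlast_lt_tt : jlast s t q < tt t q.
Proof.
rewrite /jlast; have := mem_last 0 (Jseq s t q).
rewrite inE => /predU1P[-> | ]; first exact: tt_gt0.
by rewrite mem_Jseq => /andP[].
Qed.

Lemma SH_eq_SJ m : jlast s t q < m <= j0 s t q + tt t q -> SH s t q 0 m = SJ s t q.
Proof.
case/andP=> jlast_lt_m m_le.
have gap a b : jlast s t q < a -> b <= j0 s t q + tt t q -> SH s t q a b = 0.
  by move=> ? ?; apply: SH_eq0 => k /andP[? ?]; apply: notin_H_gap; lia.
have tt_le : tt t q <= j0 s t q + tt t q by rewrite leq_addl.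
rewrite SJ_SH (SH_cat _ _ _ (leq0n _) jlast_lt_m) (SH_cat _ _ _ (leq0n _) jlast_lt_tt).
by rewrite !(gap (jlast s t q).+1).
Qed.

Lemma floor_reduce i : (s + i * q) %/ t = (sbar s t q + i * qt t q) %/ tt t q.
Proof.
have rem_lt : s %% gg t q < gg t q by rewrite ltn_mod.
rewrite -(divn_pmul2r_addsmall (sbar s t q + i * qt t q) (tt t q) _ _ g_gt0 rem_lt).
rewrite -t_eq; congr (_ %/ _).
by rewrite mulnDl -mulnA -q_eq {1}(divn_eq s (gg t q)) /sbar; lia.
Qed.

Lemma floor_step j :
  (s + j.+1 * q) %/ t = (s + j * q) %/ t + q %/ t + inH s t q j.+1.
Proof.
have <- : qt t q %/ tt t q = q %/ t.
  by rewrite -(divnMl (m := qt t q) (d := tt t q) g_gt0) ![gg t q * _]mulnC -q_eq -t_eq.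
rewrite !floor_reduce mulSnr addnA divnD ?tt_gt0 //.
set a := sbar s t q + j * qt t q.
rewrite carry_mod ?ltn_mod ?tt_gt0 //; congr (_ + _ + nat_of_bool (_ < _)).
rewrite modnDm /inH /hhs /hhq modnDml -[RHS]modnDmr modnMmr modnDmr /a.
by congr (_ %% _); rewrite mulSnr; lia.
Qed.

Lemma sum_floor_closed m :
  \sum_(0 <= j < m) (s + j * q) %/ t + q %/ t * 'C(m, 2) + SH s t q 0 m =
  m * ((s + m.-1 * q) %/ t).
Proof.
elim: m => [|m IH]; first by rewrite big_geq // /SH big_geq // bin0n muln0.
have step :
    m * ((s + m.-1 * q) %/ t + q %/ t + inH s t q m) = m * ((s + m * q) %/ t).
  by case: m {IH} => // m; rewrite floor_step.
rewrite big_nat_recr //= SH_recr binS bin1.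
move: IH step; rewrite !mulnDr mulnC [_ * m]mulnC mulSn; lia.
Qed.

End FloorSums.

Local Open Scope ring_scope.

Lemma bin2_divz n : (((n%:Z - 1) * n%:Z) %/ 2)%Z = 'C(n, 2)%:Z.
Proof.
case: n => [|n]; first by rewrite mulr0 div0z.
have -> : ((n.+1)%:Z - 1) * n.+1%:Z = (n.+1 * n)%N%:Z.
  by rewrite -addn1 PoszD addrK PoszM mulrC.
by rewrite divz_nat divn2 bin2.
Qed.

Section ClosedForm.

Variables s t q : nat.
Hypotheses (s_lt_q : (s < q)%N) (t_gt0 : (0 < t)%N).

Let q_gt0 : (0 < q)%N. Proof. exact: leq_ltn_trans s_lt_q. Qed.

Lemma Mv_ge0 N : 0 <= Mv s t q N.
Proof. by rewrite oppr_ge0 -ltzD1 add0r ltz_divLR ?ltz_nat // mul1r; lia. Qed.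

Lemma ltn_absMv N j : (j < `|Mv s t q N|)%N = (s + j * q < N * t)%N.
Proof.
rewrite -ltz_nat gez0_abs ?Mv_ge0 // ltrNr ltz_divLR ?ltz_nat //.
by apply/idP/idP; lia.
Qed.

Lemma Sminus_sum_floor N :
  Sminus s t q N =
  (\sum_(0 <= j < `|Mv s t q N|) (s + j * q) %/ t)%N%:Z - `|Mv s t q N|%:Z * N%:Z.
Proof.
have adj j k : (j < `|Mv s t q k|)%N = ((s + j * q) %/ t < k)%N.
  by rewrite ltn_absMv ltn_divLR.
have /eqP := sum_galois _ _ N adj.
rewrite -(eqr_nat int) natrD !natr_sum natrM => /eqP galois.
have floor_Mv k : ((s%:Z - (k * t)%N%:Z) %/ q%:Z)%Z = - `|Mv s t q k|%N%:R.
  by rewrite natz gez0_abs ?Mv_ge0 // opprK.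
rewrite /Sminus (eq_bigr _ (fun k _ => floor_Mv k)) sumrN -!natz natr_sum -galois.
ring.
Qed.

Lemma Sminus_Sv N : Sminus s t q N = Sv s t q N - (SH s t q 0 `|Mv s t q N|)%:Z.
Proof.
have eM := gez0_abs (Mv_ge0 N).
rewrite Sminus_sum_floor /Sv /floor_xM; set m := `|Mv s t q N|%N in eM *.
rewrite -eM bin2_divz mulrBr.
have -> : m%:Z * ((s%:Z + (m%:Z - 1) * q%:Z) %/ t%:Z)%Z =
          (m * ((s + m.-1 * q) %/ t))%N%:Z.
  case: (m) => [|k]; first by rewrite !mul0r.
  by rewrite PoszM divz_nat subn1.
rewrite -(sum_floor_closed s t q t_gt0 m) !PoszD !PoszM.
ring.
Qed.

End ClosedForm.

Theorem theorem13 (s t q N : nat)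
  (hsq : (s < q)%N) (ht0 : (0 < t)%N) (htq : (t < q)%N)
  (hndvd : ~~ (t %| q)%N) (hg : (1 < gcdn t q)%N) :
  let M := Mv s t q N in
  let S := Sv s t q N in
  let Mn := `|M|%N in
  let ttl := tt t q in
  [/\ (M <= (j0 s t q)%:Z -> Sminus s t q N = S),
      ((j0 s t q)%:Z < M -> M <= (jlast s t q)%:Z ->
         Sminus s t q N = S - (SH s t q 0 Mn)%:Z),
      ((jlast s t q)%:Z < M -> M <= (j0 s t q + ttl)%:Z ->
         Sminus s t q N = S - (SJ s t q)%:Z)
    & ((jlast s t q)%:Z < M -> (j0 s t q + ttl)%:Z < M ->
         let u := ((M - 1) %/ ttl%:Z)%Z in
         Sminus s t q N =
           S - u * (SJ s t q)%:Z
             - (hhq t q)%:Z * ttl%:Z * (((u - 1) * u) %/ 2)%Z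
             - (SH s t q (`|u|%N * ttl) Mn)%:Z)].
Proof.
move=> M S Mn ttl.
have closed : Sminus s t q N = S - (SH s t q 0 Mn)%:Z := Sminus_Sv s t q hsq ht0 N.
have -> : M = Mn%:Z by rewrite gez0_abs // (Mv_ge0 s t q hsq).
split.
- rewrite lez_nat => Mn_le_j0; rewrite closed SH_eq0 ?subr0 // => k /andP[_ k_lt].
  by apply/negP => /(j0_le_inH s t q ht0); lia.
- by rewrite closed.
- rewrite ltz_nat lez_nat => jlast_lt Mn_le.
  by rewrite closed SH_eq_SJ // jlast_lt Mn_le.
rewrite !ltz_nat => _ lt_Mn u.
have -> : u = ((Mn.-1) %/ ttl)%N%:Z.
  have Mn_gt0 : (0 < Mn)%N := leq_ltn_trans (leq0n _) lt_Mn.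
  by rewrite /u -[in LHS](prednK Mn_gt0) -addn1 PoszD addrK divz_nat.
set un := (Mn.-1 %/ ttl)%N.
have un_le : (un * ttl <= Mn)%N := leq_trans (leq_divM _ _) (leq_pred _).
rewrite /= bin2_divz closed (SH_cat s t q 0 _ _ (leq0n _) un_le) SH_periods //.
by rewrite !PoszD !PoszM; ring.
Qed.
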